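(* As $\ell\to0$, $\frac{F(\omega_1(\ell))+F(\omega_{-1}(\ell))}{2}=F(\kappa)$, $\frac{F(\omega_1(\ell))-F(\omega_{-1}(\ell))}{2}=\Big(F'(\kappa)+(\kappa F''(\kappa)-F'(\kappa))\frac{\ell^2}{2\kappa^2}\Big)\xi_+(\ell)+\frac16F'''(\kappa)\,\xi_+(\ell)^3+O(\ell^5)$, and $\xi_+(\ell)=\ell\sqrt{-\frac{F'(\kappa)}{\kappa F''(\kappa)}}\Big(1+\frac{\ell^2}{2\kappa^2}\Big(\frac34-\frac{F'(\kappa)}{\kappa F''(\kappa)}+\frac\kappa4\Big(\frac{F''(\kappa)}{F'(\kappa)}-2\frac{F'''(\kappa)}{F''(\kappa)}\Big)+\frac{\kappa}{12}\frac{F''''(\kappa)F'(\kappa)}{F''(\kappa)^2}\Big)\Big)+O(\ell^5)$.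
   Context: Fix $\kappa>0$ and set $\mu_0:=\kappa/\tanh(\kappa)$. Let $F:\mathbb R\to\mathbb R$ be the odd analytic function with $F(r)=\sqrt{r\tanh r}$ for $r\ge0$ (one has $F'>0$ and $F''(\kappa)<0$). For $n\in\mathbb Z$, $(\ell,\xi)\in\mathbb R^2$ set $|n\kappa|_{\ell,\xi}:=\sqrt{(n\kappa+\xi)^2+\ell^2}$ and $\lambda^\pm_{n,\ell,\xi}:=i(n\kappa+\xi\pm\sqrt{\mu_0}F(|n\kappa|_{\ell,\xi}))$. Let $\xi_+$ be the odd analytic function defined near $0$ with $\xi_+'(0)>0$ such that $\lambda^-_{1,\ell,\xi_+(\ell)}=\lambda^+_{-1,\ell,\xi_+(\ell)}$ for all small $\ell$, and set $\omega_j(\ell):=\sqrt{(j\kappa+\xi_+(\ell))^2+\ell^2}$ for $j\in\mathbb Z$. *)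

From Stdlib Require Import Reals.
From Coquelicot Require Import Coquelicot.
Open Scope R_scope.

(* F : the odd function with F r = sqrt (r tanh r) for r >= 0.
   Since r * tanh r is even and >= 0, for r < 0 we set F r = - sqrt (r tanh r). *)
Definition F (r : R) : R :=
  if Rle_dec 0 r then sqrt (r * tanh r) else - sqrt (r * tanh r).

Definition mu0 (kappa : R) : R := kappa / tanh kappa.

Definition absnk (kappa : R) (n : Z) (l xi : R) : R :=
  sqrt ((IZR n * kappa + xi) ^ 2 + l ^ 2).

Definition lam_plus (kappa : R) (n : Z) (l xi : R) : C :=
  Cmult Ci (RtoC (IZR n * kappa + xi + sqrt (mu0 kappa) * F (absnk kappa n l xi))).
Definition lam_minus (kappa : R) (n : Z) (l xi : R) : C :=
  Cmult Ci (RtoC (IZR n * kappa + xi - sqrt (mu0 kappa) * F (absnk kappa n l xi))).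

Definition is_xi_plus (kappa : R) (xi : R -> R) : Prop :=
  (exists (a : nat -> R) (r : R), 0 < r /\
     forall l, Rabs l < r ->
       xi (- l) = - xi l /\
       is_pseries a l (xi l) /\
       lam_minus kappa 1 l (xi l) = lam_plus kappa (-1) l (xi l))
  /\ (exists d, is_derive xi 0 d /\ 0 < d).

Definition omega (kappa : R) (xi : R -> R) (j : Z) (l : R) : R :=
  absnk kappa j l (xi l).

Definition dF (k : nat) (x : R) : R := Derive_n F k x.

From Stdlib Require Import Reals Lra Lia List.
From Coquelicot Require Import Coquelicot.
Import ListNotations.
Open Scope R_scope.

(** Write [omega_{+-1} = kappa + branch kappa (+-xi l) l], where
    [branch kappa x l = sqrt ((kappa + x)^2 + l^2) - kappa].  The imaginary parts of
    the eigenvalue equation say [F omega_1 + F omega_{-1} = 2 F kappa], because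
    [sqrt mu0 * F kappa = kappa].  Since [xi] is odd and analytic,
    [xi = b1 l + b3 l^3 + O(l^5)]; hence [xi = O(l)], each branch is a polynomial in
    [(xi, l)] up to [O(l^5)], and Taylor's formula for [F] at [kappa] turns
    [F omega_{+-1}] into polynomials in [(xi, l)] up to [O(l^5)].  Half their difference
    is the second expansion.  In their sum, substituting the expansion of [xi] leaves
    [c2 l^2 + c4 l^4 = O(l^5)], so [c2 = c4 = 0]; these two equations determine [b1 > 0]
    and [b3], which is the third expansion.

    The polynomial truncations are done by reflection: when the variables have known
    orders [O(l^w_i)], a polynomial splits into its monomials of weight [< 5], computed by
    evaluation, and the others, which are [O(l^5)]. *)

Lemma pow_le_1_antimono (a : R) (m n : nat) :
  0 <= a <= 1 -> (m <= n)%nat -> a ^ n <= a ^ m.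
Proof.
  intros Ha Hmn. replace n with (m + (n - m))%nat by lia. rewrite pow_add.
  rewrite <- (Rmult_1_r (a ^ m)) at 2. apply Rmult_le_compat_l; [now apply pow_le|].
  rewrite <- (pow1 (n - m)). now apply pow_incr.
Qed.

Definition near0 (P : R -> Prop) : Prop :=
  exists delta, 0 < delta /\ forall l, Rabs l < delta -> P l.

Lemma near0_abs_lt eps : 0 < eps -> near0 (fun l => Rabs l < eps).
Proof. intros Heps. now exists eps. Qed.

Lemma near0_impl (P Q : R -> Prop) : near0 P -> (forall l, P l -> Q l) -> near0 Q.
Proof. intros [d [Hd HP]] HPQ. exists d. split; auto. Qed.

Lemma near0_and (P Q : R -> Prop) : near0 P -> near0 Q -> near0 (fun l => P l /\ Q l).
Proof.
  intros [d1 [Hd1 HP]] [d2 [Hd2 HQ]]. exists (Rmin d1 d2).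
  split; [now apply Rmin_glb_lt|]. intros l Hl.
  pose proof (Rmin_l d1 d2). pose proof (Rmin_r d1 d2). split; [apply HP | apply HQ]; lra.
Qed.

Lemma near0_continuity_pt (f : R -> R) :
  continuity_pt f 0 -> near0 (fun l => Rabs (f l) <= Rabs (f 0) + 1).
Proof.
  intros Hf. destruct (Hf 1 Rlt_0_1) as [d [Hd Hfd]]. exists d. split; auto.
  intros l Hl. destruct (Req_dec l 0) as [->|Hl0]; [lra|].
  assert (H : Rabs (f l - f 0) < 1).
  { apply (Hfd l). split; [split; [exact I | auto]|].
    simpl. unfold R_dist. now rewrite Rminus_0_r. }
  pose proof (Rabs_triang_inv (f l) (f 0)). lra.
Qed.

Definition bigO (n : nat) (f : R -> R) : Prop :=
  exists C, near0 (fun l => Rabs (f l) <= C * Rabs l ^ n).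

Lemma bigO_le n (f g : R -> R) :
  bigO n g -> near0 (fun l => Rabs (f l) <= Rabs (g l)) -> bigO n f.
Proof.
  intros [C HC] Hfg. exists C. apply (near0_impl _ _ (near0_and _ _ HC Hfg)).
  intros l [H1 H2]. lra.
Qed.

Lemma bigO_eq n (f g : R -> R) : bigO n g -> near0 (fun l => f l = g l) -> bigO n f.
Proof.
  intros Hg Hfg. apply (bigO_le n f g Hg). apply (near0_impl _ _ Hfg).
  intros l ->. lra.
Qed.

Lemma bigO_ext n (f g : R -> R) : bigO n g -> (forall l, f l = g l) -> bigO n f.
Proof.
  intros Hg Hfg. apply (bigO_eq _ _ _ Hg). exists 1. split; [lra|]. intros l _. apply Hfg.
Qed.

Lemma bigO_const c : bigO 0 (fun _ => c).
Proof. exists (Rabs c). exists 1. split; [lra|]. intros l _. simpl. lra. Qed.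

Lemma bigO_zero n : bigO n (fun _ => 0).
Proof. exists 0. exists 1. split; [lra|]. intros l _. rewrite Rabs_R0. lra. Qed.

Lemma bigO_id : bigO 1 (fun l => l).
Proof. exists 1. exists 1. split; [lra|]. intros l _. simpl. lra. Qed.

Lemma bigO_add n (f g : R -> R) : bigO n f -> bigO n g -> bigO n (fun l => f l + g l).
Proof.
  intros [C1 H1] [C2 H2]. exists (C1 + C2). apply (near0_impl _ _ (near0_and _ _ H1 H2)).
  intros l [Hf Hg]. eapply Rle_trans; [apply Rabs_triang | lra].
Qed.

Lemma bigO_scal n c (f : R -> R) : bigO n f -> bigO n (fun l => c * f l).
Proof.
  intros [C HC]. exists (Rabs c * C). apply (near0_impl _ _ HC). intros l Hl.
  rewrite Rabs_mult, Rmult_assoc. apply Rmult_le_compat_l; [apply Rabs_pos | exact Hl].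
Qed.

Lemma bigO_opp n (f : R -> R) : bigO n f -> bigO n (fun l => - f l).
Proof.
  intros Hf. apply (bigO_ext n _ _ (bigO_scal n (-1) f Hf)). intros l. ring.
Qed.

Lemma bigO_sub n (f g : R -> R) : bigO n f -> bigO n g -> bigO n (fun l => f l - g l).
Proof. intros Hf Hg. exact (bigO_add n f _ Hf (bigO_opp n g Hg)). Qed.

Lemma bigO_mul m n (f g : R -> R) :
  bigO m f -> bigO n g -> bigO (m + n) (fun l => f l * g l).
Proof.
  intros [C1 H1] [C2 H2]. exists (C1 * C2). apply (near0_impl _ _ (near0_and _ _ H1 H2)).
  intros l [Hf Hg]. rewrite Rabs_mult, pow_add.
  replace (C1 * C2 * (Rabs l ^ m * Rabs l ^ n)) with ((C1 * Rabs l ^ m) * (C2 * Rabs l ^ n))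
    by ring.
  apply Rmult_le_compat; auto using Rabs_pos.
Qed.

Lemma bigO_pow n k (f : R -> R) : bigO n f -> bigO (n * k) (fun l => f l ^ k).
Proof.
  intros Hf. induction k as [|k IH].
  - rewrite Nat.mul_0_r. exact (bigO_const 1).
  - replace (n * S k)%nat with (n + n * k)%nat by lia. exact (bigO_mul _ _ _ _ Hf IH).
Qed.

Lemma bigO_weaken m n (f : R -> R) : (m <= n)%nat -> bigO n f -> bigO m f.
Proof.
  intros Hmn [C HC]. exists (Rabs C).
  apply (near0_impl _ _ (near0_and _ _ HC (near0_abs_lt 1 Rlt_0_1))). intros l [Hf Hl].
  eapply Rle_trans; [apply Hf|].
  eapply Rle_trans; [apply Rmult_le_compat_r, Rle_abs; apply pow_le, Rabs_pos|].
  apply Rmult_le_compat_l; [apply Rabs_pos|].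
  apply pow_le_1_antimono; auto. split; [apply Rabs_pos | lra].
Qed.

Lemma bigO_small n (f : R -> R) eps :
  0 < eps -> bigO (S n) f -> near0 (fun l => Rabs (f l) <= eps).
Proof.
  intros Heps Hf. destruct (bigO_weaken 1 (S n) f ltac:(lia) Hf) as [C HC].
  set (d := eps / (Rabs C + 1)).
  assert (Hd : 0 < d) by (apply Rdiv_lt_0_compat; [lra | pose proof (Rabs_pos C); lra]).
  apply (near0_impl _ _ (near0_and _ _ HC (near0_abs_lt d Hd))). intros l [Hfl Hl].
  rewrite pow_1 in Hfl. eapply Rle_trans; [apply Hfl|].
  apply Rle_trans with ((Rabs C + 1) * d); [|right; unfold d; field; pose proof (Rabs_pos C); lra].
  pose proof (Rabs_pos C). pose proof (Rabs_pos l).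
  apply Rle_trans with (Rabs C * Rabs l); [apply Rmult_le_compat_r; auto using Rle_abs|].
  apply Rmult_le_compat; lra.
Qed.

Lemma bigO_comp k (h g : R -> R) M rho :
  0 < rho -> (forall u, Rabs u <= rho -> Rabs (h u) <= M * Rabs u ^ k) ->
  bigO 1 g -> bigO k (fun l => h (g l)).
Proof.
  intros Hrho Hh Hg. destruct Hg as [C HC].
  exists (Rabs M * Rabs C ^ k).
  apply (near0_impl _ _ (near0_and _ _ HC (bigO_small 0 g rho Hrho (ex_intro _ C HC)))).
  intros l [Hgl Hsmall]. rewrite pow_1 in Hgl.
  eapply Rle_trans; [apply Hh, Hsmall|]. rewrite Rmult_assoc, <- Rpow_mult_distr.
  eapply Rle_trans; [apply Rmult_le_compat_r, Rle_abs; apply pow_le, Rabs_pos|].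
  apply Rmult_le_compat_l; [apply Rabs_pos|]. apply pow_incr. split; [apply Rabs_pos|].
  eapply Rle_trans; [apply Hgl|]. apply Rmult_le_compat_r; [apply Rabs_pos | apply Rle_abs].
Qed.

Lemma bigO_div n (f g : R -> R) c :
  0 < c -> bigO n f -> near0 (fun l => c <= Rabs (g l)) -> bigO n (fun l => f l / g l).
Proof.
  intros Hc [C HC] Hg. exists (Rabs C / c).
  apply (near0_impl _ _ (near0_and _ _ HC Hg)). intros l [Hf Hgl].
  unfold Rdiv. rewrite Rabs_mult, Rabs_inv.
  apply Rle_trans with (Rabs C * Rabs l ^ n * / c).
  - apply Rmult_le_compat; try apply Rabs_pos.
    + left. apply Rinv_0_lt_compat. lra.
    + eapply Rle_trans; [apply Hf|].
      apply Rmult_le_compat_r; [apply pow_le, Rabs_pos | apply Rle_abs].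
    + apply Rinv_le_contravar; lra.
  - right. ring.
Qed.

Lemma bigO_coef_0 n c : bigO (S n) (fun l => c * l ^ n) -> c = 0.
Proof.
  intros [C HC]. apply cond_eq. intros eps Heps. rewrite Rminus_0_r.
  set (d := eps / (Rabs C + 1)).
  assert (HC1 : 0 < Rabs C + 1) by (pose proof (Rabs_pos C); lra).
  assert (Hd : 0 < d) by (apply Rdiv_lt_0_compat; lra).
  destruct (near0_and _ _ HC (near0_abs_lt d Hd)) as [r [Hr Hall]].
  set (l := Rmin (r / 2) (d / 2)).
  assert (Hl : 0 < l) by (apply Rmin_glb_lt; lra).
  assert (Hlr : Rabs l < r).
  { rewrite Rabs_right by lra. pose proof (Rmin_l (r / 2) (d / 2)). unfold l in *. lra. }
  destruct (Hall l Hlr) as [Hcl Hld].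
  rewrite Rabs_mult, <- RPow_abs, (Rabs_right l) in Hcl by lra. rewrite Rabs_right in Hld by lra.
  assert (Hln : 0 < l ^ n) by (apply pow_lt; lra).
  assert (Hc : Rabs c <= Rabs C * l).
  { apply (Rmult_le_reg_r (l ^ n)); auto. eapply Rle_trans; [apply Hcl|]. simpl.
    rewrite <- Rmult_assoc. apply Rmult_le_compat_r; [lra|].
    apply Rmult_le_compat_r; [lra | apply Rle_abs]. }
  assert (Hd' : (Rabs C + 1) * d = eps) by (unfold d; field; lra).
  assert (Rabs C * l <= Rabs C * d) by (apply Rmult_le_compat_l; [apply Rabs_pos | lra]).
  lra.
Qed.

Lemma bigO_odd_cubic (f : R -> R) b1 b3 :
  bigO 5 (fun l => f l - b1 * l - b3 * l ^ 3) -> bigO 1 f.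
Proof.
  intros Hf. apply (bigO_ext _ _ (fun l => (f l - b1 * l - b3 * l ^ 3) + b1 * l + b3 * l ^ 3)).
  - apply bigO_add; [apply bigO_add|].
    + exact (bigO_weaken 1 5 _ ltac:(lia) Hf).
    + exact (bigO_scal 1 b1 _ bigO_id).
    + exact (bigO_scal 1 b3 _ (bigO_weaken 1 3 _ ltac:(lia) (bigO_pow 1 3 _ bigO_id))).
  - intros l. ring.
Qed.

Lemma bigO_even_quartic c2 c4 :
  bigO 5 (fun l => c2 * l ^ 2 + c4 * l ^ 4) -> c2 = 0 /\ c4 = 0.
Proof.
  intros H. assert (H4 := bigO_scal 4 c4 _ (bigO_pow 1 4 _ bigO_id)).
  assert (Hc2 : c2 = 0).
  { apply (bigO_coef_0 2). apply (bigO_ext _ _ _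
      (bigO_sub _ _ _ (bigO_weaken 3 5 _ ltac:(lia) H) (bigO_weaken 3 4 _ ltac:(lia) H4))).
    intros l. ring. }
  split; [exact Hc2|]. subst c2. apply (bigO_coef_0 4). apply (bigO_ext _ _ _ H). intros l. ring.
Qed.

(** A polynomial is a list of monomials [(c, [e_0; e_1; ...])], read
    [c * v_0 ^ e_0 * v_1 ^ e_1 * ...]; missing exponents count as [0]. *)
Definition polynomial := list (R * list nat).

Fixpoint evalM (vs : list R) (es : list nat) : R :=
  match vs, es with
  | v :: vs', e :: es' => v ^ e * evalM vs' es'
  | _, _ => 1
  end.

Definition evalP (vs : list R) (p : polynomial) : R :=
  fold_right (fun m acc => fst m * evalM vs (snd m) + acc) 0 p.

Fixpoint madd (e f : list nat) : list nat :=
  match e, f with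
  | a :: e', b :: f' => (a + b)%nat :: madd e' f'
  | [], _ => f
  | _, [] => e
  end.

Definition pconst (c : R) : polynomial := [(c, [])].
Definition pvar (i : nat) : polynomial := [(1, repeat 0%nat i ++ [1%nat])].
Definition pscale (c : R) (p : polynomial) : polynomial :=
  map (fun m => (c * fst m, snd m)) p.
Definition pmul (p q : polynomial) : polynomial :=
  flat_map (fun m => map (fun n => (fst m * fst n, madd (snd m) (snd n))) q) p.
Fixpoint ppow (p : polynomial) (n : nat) : polynomial :=
  match n with O => pconst 1 | S n' => pmul p (ppow p n') end.
Definition pcomp (p : polynomial) (qs : list polynomial) : polynomial :=
  flat_map (fun m => pscale (fst m) (fold_right pmul (pconst 1)
                       (map (fun qe => ppow (fst qe) (snd qe)) (combine qs (snd m))))) p.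

Lemma evalP_app vs p q : evalP vs (p ++ q) = evalP vs p + evalP vs q.
Proof. induction p as [|m p IH]; simpl; [ring | rewrite IH; ring]. Qed.

Lemma evalP_pconst vs c : evalP vs (pconst c) = c.
Proof. destruct vs; simpl; ring. Qed.

Lemma evalP_pscale vs c p : evalP vs (pscale c p) = c * evalP vs p.
Proof. induction p as [|m p IH]; simpl; [ring | rewrite IH; ring]. Qed.

Lemma evalM_madd vs e f : evalM vs (madd e f) = evalM vs e * evalM vs f.
Proof.
  revert e f. induction vs as [|v vs IH]; intros [|a e] [|b f]; simpl; try ring.
  rewrite IH, pow_add. ring.
Qed.

Lemma evalP_pmul vs p q : evalP vs (pmul p q) = evalP vs p * evalP vs q.
Proof.
  induction p as [|m p IH]; simpl; [ring|]. rewrite evalP_app, IH.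
  assert (Hq : evalP vs (map (fun n => (fst m * fst n, madd (snd m) (snd n))) q)
               = fst m * evalM vs (snd m) * evalP vs q).
  { clear IH. induction q as [|n q IHq]; simpl; [ring|]. rewrite IHq, evalM_madd. ring. }
  rewrite Hq. ring.
Qed.

Lemma evalP_ppow vs p n : evalP vs (ppow p n) = evalP vs p ^ n.
Proof. induction n as [|n IH]; simpl; [apply evalP_pconst | rewrite evalP_pmul, IH; ring]. Qed.

Lemma evalP_pcomp vs p qs : evalP vs (pcomp p qs) = evalP (map (evalP vs) qs) p.
Proof.
  induction p as [|[c es] p IH]; simpl; [reflexivity|]. rewrite evalP_app, evalP_pscale, IH.
  f_equal. f_equal. clear. revert es. induction qs as [|q qs IH]; intros [|e es]; simpl;
    try apply evalP_pconst.
  rewrite evalP_pmul, evalP_ppow, IH. reflexivity.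
Qed.

Fixpoint weight (ws es : list nat) : nat :=
  match ws, es with
  | w :: ws', e :: es' => (w * e + weight ws' es')%nat
  | _, _ => 0%nat
  end.

(** When each variable [v_i] is [O(l ^ w_i)], a monomial of weight at least [w] is
    [O(l ^ w)]; only the [light] part of a polynomial has to be computed. *)
Definition light (w : nat) (ws : list nat) (p : polynomial) : polynomial :=
  filter (fun m => Nat.ltb (weight ws (snd m)) w) p.
Definition heavy (w : nat) (ws : list nat) (p : polynomial) : polynomial :=
  filter (fun m => negb (Nat.ltb (weight ws (snd m)) w)) p.

Lemma evalP_light_heavy vs w ws p :
  evalP vs p = evalP vs (light w ws p) + evalP vs (heavy w ws p).
Proof.
  induction p as [|m p IH]; simpl; [ring|]. unfold light, heavy in *.
  destruct (Nat.ltb (weight ws (snd m)) w); simpl; rewrite IH; ring.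
Qed.

Definition vals (fs : list (R -> R)) (l : R) : list R := map (fun f => f l) fs.

Lemma bigO_evalM ws fs es :
  Forall2 bigO ws fs -> bigO (weight ws es) (fun l => evalM (vals fs l) es).
Proof.
  intros Hfs. revert es. induction Hfs as [|w f ws fs Hf _ IH]; intros [|e es];
    try exact (bigO_const 1).
  exact (bigO_mul _ _ _ _ (bigO_pow _ e _ Hf) (IH es)).
Qed.

Lemma bigO_evalP w ws fs p :
  Forall2 bigO ws fs -> List.Forall (fun m => (w <= weight ws (snd m))%nat) p ->
  bigO w (fun l => evalP (vals fs l) p).
Proof.
  intros Hfs Hp. induction Hp as [|m p Hm _ IH].
  - apply bigO_zero.
  - apply bigO_add; [apply bigO_scal | exact IH].
    exact (bigO_weaken _ _ _ Hm (bigO_evalM _ _ _ Hfs)).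
Qed.

Lemma bigO_poly_expansion w ws fs p (g : R -> R) :
  Forall2 bigO ws fs -> (forall l, evalP (vals fs l) (light w ws p) = g l) ->
  bigO w (fun l => evalP (vals fs l) p - g l).
Proof.
  intros Hfs Hg. apply (bigO_ext _ _ (fun l => evalP (vals fs l) (heavy w ws p))).
  - apply (bigO_evalP _ _ _ _ Hfs). apply List.Forall_forall. intros m Hm.
    apply filter_In in Hm as [_ Hm]. apply Bool.negb_true_iff, Nat.ltb_ge in Hm. exact Hm.
  - intros l. rewrite (evalP_light_heavy _ w ws p), Hg. ring.
Qed.

Lemma bigO_poly w ws fs p :
  Forall2 bigO ws fs -> (forall l, evalP (vals fs l) (light w ws p) = 0) ->
  bigO w (fun l => evalP (vals fs l) p).
Proof.
  intros Hfs H0. apply (bigO_ext _ _ _ (bigO_poly_expansion w ws fs p (fun _ => 0) Hfs H0)).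
  intros l. ring.
Qed.

Lemma locally_abs_lt x y rho :
  Rabs (y - x) < rho -> locally y (fun z => Rabs (z - x) < rho).
Proof.
  intros Hy. apply Rabs_lt_between' in Hy.
  apply (filter_imp (fun z => x - rho < z /\ z < x + rho)).
  - intros z Hz. apply Rabs_lt_between'. lra.
  - apply (open_and _ _ (open_gt _) (open_lt _)). lra.
Qed.

Lemma pow_opp_mul_opp h m : (- h) ^ m * (-1) ^ m = h ^ m.
Proof. rewrite <- Rpow_mult_distr. f_equal. ring. Qed.

Lemma Taylor_Lagrange_two_sided f n x rho h :
  (forall t, Rabs (t - x) < rho -> forall k, ex_derive_n f k t) ->
  h <> 0 -> Rabs h < rho ->
  exists z, Rabs (z - x) <= Rabs h /\
    f (x + h) = sum_f_R0 (fun m => h ^ m / INR (Factorial.fact m) * Derive_n f m x) n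
                + h ^ S n / INR (Factorial.fact (S n)) * Derive_n f (S n) z.
Proof.
  intros Hf Hh0 Hh. destruct (Rlt_or_le 0 h) as [Hpos | Hneg].
  - rewrite Rabs_right in Hh by lra.
    destruct (Taylor_Lagrange f n x (x + h)) as [z [Hz Heq]]; [lra | |].
    { intros t Ht k _. apply Hf. apply Rabs_lt_between'. lra. }
    exists z. split; [rewrite !Rabs_right by lra; lra|].
    replace (x + h - x) with h in Heq by ring. exact Heq.
  - (* reflect: [Taylor_Lagrange] for [y |-> f (- y)] between [- x] and [- x - h] *)
    assert (Hneg' : h < 0) by lra. rewrite Rabs_left in Hh by lra.
    assert (Hloc : forall t N, Rabs (t - x) < rho ->
      locally t (fun y => forall k, (k <= N)%nat -> ex_derive_n f k y)).
    { intros t N Ht. apply (filter_imp _ _ (fun y Hy k _ => Hf y Hy k)), locally_abs_lt, Ht. }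
    destruct (Taylor_Lagrange (fun y => f (- y)) n (- x) (- x - h)) as [z [Hz Heq]]; [lra | |].
    { intros t Ht k Hk. apply ex_derive_n_comp_opp.
      apply (filter_imp _ _ (fun y Hy k' Hk' => Hy k' (Nat.le_trans _ _ _ Hk' Hk))).
      apply Hloc. apply Rabs_lt_between'. lra. }
    exists (- z). split; [rewrite !Rabs_left by lra; lra|].
    replace (x + h) with (- (- x - h)) by ring. rewrite Heq.
    rewrite Derive_n_comp_opp by (apply Hloc; rewrite Rabs_left by lra; lra).
    replace (- x - h - - x) with (- h) by ring.
    assert (Hfact : forall m, INR (Factorial.fact m) <> 0)
      by (intros; apply not_0_INR, Factorial.fact_neq_0).
    f_equal.
    + apply sum_eq. intros m _. rewrite Derive_n_comp_opp
        by (rewrite Ropp_involutive; apply Hloc; rewrite Rminus_diag, Rabs_R0; lra).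
      rewrite Ropp_involutive, <- (pow_opp_mul_opp h m). field. apply Hfact.
    + rewrite <- (pow_opp_mul_opp h (S n)). field. apply Hfact.
Qed.

Lemma cosh_pos x : 0 < cosh x.
Proof. unfold cosh. pose proof (exp_pos x). pose proof (exp_pos (- x)). lra. Qed.

Lemma tanh_pos x : 0 < x -> 0 < tanh x.
Proof.
  intros Hx. apply Rdiv_lt_0_compat; [|apply cosh_pos].
  rewrite <- sinh_0. now apply sinh_lt.
Qed.

Lemma tanh_lt_1 x : tanh x < 1.
Proof.
  unfold tanh. apply (Rmult_lt_reg_r (cosh x)); [apply cosh_pos|].
  unfold Rdiv. rewrite Rmult_assoc, Rinv_l by (pose proof (cosh_pos x); lra).
  unfold sinh, cosh. pose proof (exp_pos (- x)). lra.
Qed.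

Lemma is_derive_tanh x : is_derive tanh x (1 - tanh x ^ 2).
Proof.
  pose proof (cosh_pos x) as Hc.
  replace (1 - tanh x ^ 2) with ((cosh x * cosh x - sinh x * sinh x) / cosh x ^ 2).
  - apply is_derive_div; [| |lra]; apply is_derive_Reals;
      [apply derivable_pt_lim_sinh | apply derivable_pt_lim_cosh].
  - unfold tanh. field. lra.
Qed.

(** On [0 < x], [F x = sqrt (x * tanh x)]. Its derivatives of all orders are
    values of expressions in [x], [tanh x], [sqrt (x * tanh x)] and
    [/ sqrt (x * tanh x)], a language closed under differentiation. *)
Inductive texpr :=
  | TCst (c : R) | TId | TTanh | TSqrt | TInvSqrt
  | TAdd (a b : texpr) | TMul (a b : texpr).

Fixpoint teval (e : texpr) (x : R) : R :=
  match e with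
  | TCst c => c
  | TId => x
  | TTanh => tanh x
  | TSqrt => sqrt (x * tanh x)
  | TInvSqrt => / sqrt (x * tanh x)
  | TAdd a b => teval a x + teval b x
  | TMul a b => teval a x * teval b x
  end.

Definition dtanh : texpr := TAdd (TCst 1) (TMul (TCst (-1)) (TMul TTanh TTanh)).
Definition dxtanh : texpr := TAdd TTanh (TMul TId dtanh).

Fixpoint tderiv (e : texpr) : texpr :=
  match e with
  | TCst _ => TCst 0
  | TId => TCst 1
  | TTanh => dtanh
  | TSqrt => TMul (TCst (1 / 2)) (TMul dxtanh TInvSqrt)
  | TInvSqrt => TMul (TCst (- 1 / 2)) (TMul dxtanh (TMul TInvSqrt (TMul TInvSqrt TInvSqrt)))
  | TAdd a b => TAdd (tderiv a) (tderiv b)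
  | TMul a b => TAdd (TMul (tderiv a) b) (TMul a (tderiv b))
  end.

Lemma is_derive_xtanh x : is_derive (fun y => y * tanh y) x (teval dxtanh x).
Proof.
  simpl. replace (tanh x + x * (1 + -1 * (tanh x * tanh x)))
    with (1 * tanh x + x * (1 - tanh x ^ 2)) by ring.
  apply is_derive_Reals, (derivable_pt_lim_mult (fun y => y) tanh);
    [apply derivable_pt_lim_id | apply is_derive_Reals, is_derive_tanh].
Qed.

Lemma is_derive_teval e x : 0 < x -> is_derive (teval e) x (teval (tderiv e) x).
Proof.
  intros Hx. assert (Hg : 0 < x * tanh x) by (pose proof (tanh_pos x Hx); nra).
  pose proof (sqrt_lt_R0 _ Hg) as Hs.
  induction e; cbn [teval tderiv].
  - apply is_derive_Reals, derivable_pt_lim_const.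
  - apply is_derive_Reals, derivable_pt_lim_id.
  - simpl. replace (1 + -1 * (tanh x * tanh x)) with (1 - tanh x ^ 2) by ring. apply is_derive_tanh.
  - replace (1 / 2 * (teval dxtanh x * / sqrt (x * tanh x)))
      with (teval dxtanh x / (2 * sqrt (x * tanh x))) by (field; lra).
    apply (is_derive_sqrt (fun y => y * tanh y)); [apply is_derive_xtanh | exact Hg].
  - replace (- 1 / 2 * (teval dxtanh x
                 * (/ sqrt (x * tanh x) * (/ sqrt (x * tanh x) * / sqrt (x * tanh x)))))
      with (- (teval dxtanh x / (2 * sqrt (x * tanh x))) / sqrt (x * tanh x) ^ 2)
      by (field; lra).
    apply (is_derive_inv (fun y => sqrt (y * tanh y))); [|lra].
    apply (is_derive_sqrt (fun y => y * tanh y)); [apply is_derive_xtanh | exact Hg].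
  - apply is_derive_Reals, derivable_pt_lim_plus; now apply is_derive_Reals.
  - apply is_derive_Reals, derivable_pt_lim_mult; now apply is_derive_Reals.
Qed.

Lemma Derive_n_F k x :
  0 < x -> Derive_n F k x = teval (Nat.iter k tderiv TSqrt) x /\ ex_derive_n F k x.
Proof.
  revert x. induction k as [|k IH]; intros x Hx.
  - split; [|exact I]. simpl. unfold F. destruct (Rle_dec 0 x); [reflexivity | lra].
  - assert (Hloc : locally x (fun t => teval (Nat.iter k tderiv TSqrt) t = Derive_n F k t)).
    { apply (filter_imp (fun t => 0 < t)); [intros t Ht; symmetry; now apply IH|].
      now apply (open_gt 0). }
    split; simpl.
    + rewrite <- (Derive_ext_loc _ _ _ Hloc). apply is_derive_unique, is_derive_teval, Hx.
    + eapply ex_derive_ext_loc; [exact Hloc|]. eexists. apply is_derive_teval, Hx.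
Qed.

Lemma teval_bounded e a b :
  0 < a <= b -> exists M, forall t, a <= t <= b -> Rabs (teval e t) <= M.
Proof.
  intros Hab.
  assert (Hc : forall t, a <= t <= b -> continuity_pt (teval e) t).
  { intros t Ht. apply derivable_continuous_pt. exists (teval (tderiv e) t).
    apply is_derive_Reals, is_derive_teval. lra. }
  destruct (continuity_ab_maj (teval e) a b ltac:(lra) Hc) as [t1 [H1 _]].
  destruct (continuity_ab_maj (fun t => - teval e t) a b ltac:(lra)) as [t2 [H2 _]].
  { intros t Ht. now apply continuity_pt_opp, Hc. }
  exists (Rabs (teval e t1) + Rabs (teval e t2)). intros t Ht.
  specialize (H1 t Ht). specialize (H2 t Ht).
  pose proof (Rle_abs (teval e t1)). pose proof (Rabs_maj2 (teval e t2)).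
  pose proof (Rabs_pos (teval e t1)). pose proof (Rabs_pos (teval e t2)).
  apply Rabs_le. lra.
Qed.

Lemma dF1_pos kappa : 0 < kappa -> 0 < dF 1 kappa.
Proof.
  intros Hk. unfold dF. rewrite (proj1 (Derive_n_F 1 kappa Hk)). simpl.
  pose proof (tanh_pos kappa Hk). pose proof (tanh_lt_1 kappa).
  assert (Hg : 0 < kappa * tanh kappa) by nra.
  pose proof (Rinv_0_lt_compat _ (sqrt_lt_R0 _ Hg)).
  assert (0 <= kappa * (1 + -1 * (tanh kappa * tanh kappa))) by (apply Rmult_le_pos; nra).
  apply Rmult_lt_0_compat; [lra|]. apply Rmult_lt_0_compat; lra.
Qed.

Definition taylor4 (f1 f2 f3 f4 h : R) : R :=
  f1 * h + f2 / 2 * h ^ 2 + f3 / 6 * h ^ 3 + f4 / 24 * h ^ 4.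

Lemma F_taylor4 kappa : 0 < kappa -> exists M, forall h, Rabs h <= kappa / 2 ->
  Rabs (F (kappa + h) - F kappa - taylor4 (dF 1 kappa) (dF 2 kappa) (dF 3 kappa) (dF 4 kappa) h)
    <= M * Rabs h ^ 5.
Proof.
  intros Hk. destruct (teval_bounded (Nat.iter 5 tderiv TSqrt) (kappa / 2) (3 * kappa / 2))
    as [M HM]; [lra|].
  exists (M / 120). intros h Hh. destruct (Req_dec h 0) as [->|Hh0].
  - unfold taylor4. rewrite Rplus_0_r, Rabs_R0, pow_i by lia. replace (_ - _) with 0 by ring.
    rewrite Rabs_R0. lra.
  - destruct (Taylor_Lagrange_two_sided F 4 kappa kappa h) as [z [Hz Heq]]; [| exact Hh0 | lra |].
    { intros t Ht k. apply Derive_n_F. apply Rabs_lt_between' in Ht. lra. }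
    assert (Hz' : kappa / 2 <= z <= 3 * kappa / 2) by (apply Rabs_le_between' in Hz; lra).
    assert (Hsum : forall g : nat -> R,
      sum_f_R0 (fun m => h ^ m / INR (Factorial.fact m) * g m) 4
      = g 0%nat + h * g 1%nat + h ^ 2 / 2 * g 2%nat + h ^ 3 / 6 * g 3%nat + h ^ 4 / 24 * g 4%nat)
      by (intros; simpl; field).
    assert (Hfact5 : INR (Factorial.fact 5) = 120) by (rewrite INR_IZR_INZ; reflexivity).
    rewrite Heq, Hsum, Hfact5, (proj1 (Derive_n_F 5 z ltac:(lra))). unfold taylor4, dF.
    match goal with |- Rabs ?e <= _ =>
      replace e with (h ^ 5 / 120 * teval (Nat.iter 5 tderiv TSqrt) z)
        by (change (Derive_n F 0 kappa) with (F kappa); field) end.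
    rewrite Rabs_mult, Rabs_div, <- RPow_abs, (Rabs_right 120) by lra.
    replace (M / 120 * Rabs h ^ 5) with (Rabs h ^ 5 / 120 * M) by field.
    apply Rmult_le_compat_l; [apply Rmult_le_pos; [apply pow_le, Rabs_pos | lra] | now apply HM].
Qed.

Definition branch (kappa x l : R) : R := sqrt ((kappa + x) ^ 2 + l ^ 2) - kappa.

(** [branch kappa x l] up to weight 4 in [x] and [l], with [c = / kappa]. *)
Definition alpha_poly (c : R) : polynomial :=
  [(1, [1; 0]%nat); (c / 2, [0; 2]%nat); (- c ^ 2 / 2, [1; 2]%nat);
   (c ^ 3 / 2, [2; 2]%nat); (- c ^ 3 / 8, [0; 4]%nat)].

Definition shift_poly (kappa : R) : polynomial :=
  [(2 * kappa, [1; 0]%nat); (1, [2; 0]%nat); (1, [0; 2]%nat)].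

Lemma branch_mul_shift kappa x l :
  branch kappa x l * (branch kappa x l + 2 * kappa) = evalP [x; l] (shift_poly kappa).
Proof.
  unfold branch. transitivity (sqrt ((kappa + x) ^ 2 + l ^ 2) ^ 2 - kappa ^ 2); [ring|].
  rewrite pow2_sqrt by (apply Rplus_le_le_0_compat; apply pow2_ge_0). simpl. ring.
Qed.

Lemma branch_shift_ge kappa x l : kappa <= branch kappa x l + 2 * kappa.
Proof. unfold branch. pose proof (sqrt_pos ((kappa + x) ^ 2 + l ^ 2)). lra. Qed.

Section BranchExpansion.

Variables (kappa : R) (x : R -> R).
Hypotheses (Hkappa : 0 < kappa) (Hx : bigO 1 x).

Let vars := [x; fun l => l].

Lemma bigO_vars_xl : Forall2 bigO [1; 1]%nat vars.
Proof. repeat constructor; auto using bigO_id. Qed.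

Lemma bigO_branch : bigO 1 (fun l => branch kappa (x l) l).
Proof.
  apply (bigO_ext _ _ (fun l => evalP (vals vars l) (shift_poly kappa)
                              / (branch kappa (x l) l + 2 * kappa))).
  - apply (bigO_div _ _ _ kappa Hkappa).
    + apply (bigO_poly _ _ _ _ bigO_vars_xl). reflexivity.
    + exists 1. split; [lra|]. intros l _.
      pose proof (branch_shift_ge kappa (x l) l). rewrite Rabs_right; lra.
  - intros l. unfold vals, vars; cbn [map]. rewrite <- branch_mul_shift. field.
    pose proof (branch_shift_ge kappa (x l) l). lra.
Qed.

Lemma bigO_branch_expansion :
  bigO 5 (fun l => branch kappa (x l) l - evalP [x l; l] (alpha_poly (/ kappa))).
Proof.
  set (a l := branch kappa (x l) l). set (A l := evalP (vals vars l) (alpha_poly (/ kappa))).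
  assert (HA : bigO 1 A)
    by (apply (bigO_poly _ _ _ _ bigO_vars_xl); intros l; vm_compute; ring).
  set (Q := pmul (alpha_poly (/ kappa)) (alpha_poly (/ kappa))
              ++ pscale (2 * kappa) (alpha_poly (/ kappa)) ++ pscale (-1) (shift_poly kappa)).
  assert (HQ : bigO 5 (fun l => evalP (vals vars l) Q)).
  { apply (bigO_poly _ _ _ _ bigO_vars_xl). intros l. vm_compute. field. lra. }
  assert (Hden : near0 (fun l => kappa <= Rabs (a l + A l + 2 * kappa))).
  { apply (near0_impl _ _ (near0_and _ _ (bigO_small 0 a (kappa / 2) ltac:(lra) bigO_branch)
                                          (bigO_small 0 A (kappa / 2) ltac:(lra) HA))).
    intros l [H1 H2]. apply Rabs_le_between in H1, H2. rewrite Rabs_right; lra. }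
  (* [a (a + 2 kappa) = s], hence [(a - A) (a + A + 2 kappa) = - (A^2 + 2 kappa A - s) = - Q] *)
  apply (bigO_eq _ _ (fun l => - evalP (vals vars l) Q / (a l + A l + 2 * kappa))).
  - exact (bigO_div _ _ _ kappa Hkappa (bigO_opp _ _ HQ) Hden).
  - apply (near0_impl _ _ Hden). intros l Hl.
    unfold Q. rewrite !evalP_app, evalP_pmul, !evalP_pscale.
    unfold vals, vars in *; cbn [map] in *. rewrite <- branch_mul_shift. fold (a l) (A l). field.
    intros E. rewrite E, Rabs_R0 in Hl. lra.
Qed.

End BranchExpansion.

Definition odd_part (a : nat -> R) (n : nat) : R := if Nat.odd n then a n else 0.

Lemma pow_opp_odd l n : (- l) ^ n = if Nat.odd n then - l ^ n else l ^ n.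
Proof.
  induction n as [|n IH]; simpl; [reflexivity|].
  rewrite IH, Nat.odd_succ, <- Nat.negb_odd. destruct (Nat.odd n); simpl; ring.
Qed.

Lemma is_pseries_odd_part a (f : R -> R) l :
  f (- l) = - f l -> is_pseries a l (f l) -> is_pseries a (- l) (f (- l)) ->
  is_pseries (odd_part a) l (f l).
Proof.
  intros Hodd Hl Hml. unfold is_pseries in *.
  pose proof (is_series_scal (/ 2) _ _ (is_series_minus _ _ _ _ Hl Hml)) as H.
  rewrite Hodd in H. unfold scal, plus, opp in H; simpl in H; unfold mult in H; simpl in H.
  replace (/ 2 * (f l + - - f l)) with (f l) in H by field.
  eapply is_series_ext; [|exact H]. intros n.
  unfold scal, plus, opp; simpl; unfold mult; simpl. rewrite !pow_n_pow, pow_opp_odd.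
  unfold odd_part. destruct (Nat.odd n); field.
Qed.

Lemma CV_radius_decr_n (a : nat -> R) n : CV_radius (PS_decr_n a n) = CV_radius a.
Proof.
  induction n as [|n IH]; [now apply CV_radius_ext|].
  rewrite <- IH, <- (CV_radius_decr_1 (PS_decr_n a n)).
  apply CV_radius_ext. intros k. unfold PS_decr_n, PS_decr_1. f_equal. lia.
Qed.

Lemma CV_radius_pos_of_pseries (a : nat -> R) x s :
  x <> 0 -> is_pseries a x s -> Rbar_lt 0 (CV_radius a).
Proof.
  intros Hx Hs.
  assert (Hlim : Un_cv (fun n => Rabs (a n * x ^ n)) 0).
  { apply is_lim_seq_Reals. rewrite <- Rabs_R0. apply (is_lim_seq_abs _ 0).
    apply ex_series_lim_0. exists s. eapply is_series_ext; [|exact Hs].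
    intros n. unfold scal; simpl; unfold mult; simpl. rewrite pow_n_pow. apply Rmult_comm. }
  destruct (cauchy_bound _ (CV_Cauchy _ (exist _ 0 Hlim))) as [M HM].
  apply Rbar_lt_le_trans with (Rabs x); [simpl; now apply Rabs_pos_lt|].
  apply (proj1 (CV_radius_bounded a)). exists M. intros n. apply HM. exists n.
  rewrite !Rabs_mult, RPow_abs, Rabs_Rabsolu. reflexivity.
Qed.

Lemma odd_pseries_expansion (f : R -> R) a r d :
  0 < r -> (forall l, Rabs l < r -> f (- l) = - f l /\ is_pseries a l (f l)) ->
  is_derive f 0 d ->
  d = a 1%nat /\ bigO 5 (fun l => f l - a 1%nat * l - a 3%nat * l ^ 3).
Proof.
  intros Hr Hf Hd. set (b := odd_part a).
  assert (Hb : forall l, Rabs l < r -> is_pseries b l (f l)).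
  { intros l Hl. apply is_pseries_odd_part; [apply (Hf l Hl) | apply (Hf l Hl) |].
    apply Hf. now rewrite Rabs_Ropp. }
  assert (Hrad : Rbar_lt 0 (CV_radius b)).
  { apply (CV_radius_pos_of_pseries b (r / 2) (f (r / 2))); [lra|].
    apply Hb. rewrite Rabs_right; lra. }
  split.
  - assert (Hloc : locally 0 (fun t => PSeries b t = f t)).
    { apply (filter_imp (fun t => Rabs (t - 0) < r)).
      + intros t Ht. apply is_pseries_unique, Hb. now rewrite Rminus_0_r in Ht.
      + apply locally_abs_lt. rewrite Rminus_diag, Rabs_R0. exact Hr. }
    assert (Hd' := is_derive_PSeries b 0 ltac:(now rewrite Rabs_R0)).
    apply (is_derive_ext_loc _ _ _ _ Hloc) in Hd'.
    rewrite <- (is_derive_unique _ _ _ Hd), (is_derive_unique _ _ _ Hd'), PSeries_0.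
    unfold PS_derive, b, odd_part. simpl. ring.
  - set (g := PSeries (PS_decr_n b 5)).
    assert (Hg : continuity_pt g 0).
    { apply PSeries_continuity. rewrite CV_radius_decr_n, Rabs_R0. exact Hrad. }
    exists (Rabs (g 0) + 1).
    apply (near0_impl _ _ (near0_and _ _ (near0_continuity_pt g Hg) (near0_abs_lt r Hr))).
    intros l [Hgl Hl].
    rewrite <- (is_pseries_unique _ _ _ (Hb l Hl)), (PSeries_decr_n b 4 l)
      by (eexists; apply Hb, Hl).
    match goal with |- Rabs ?e <= _ =>
      replace e with (l ^ 5 * g l) by (unfold g, b, odd_part; simpl; ring) end.
    rewrite Rabs_mult, <- RPow_abs, Rmult_comm.
    apply Rmult_le_compat_r; [apply pow_le, Rabs_pos | exact Hgl].
Qed.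

Definition taylor_poly (f1 f2 f3 f4 : R) : polynomial :=
  [(f1, [1%nat]); (f2 / 2, [2%nat]); (f3 / 6, [3%nat]); (f4 / 24, [4%nat])].

Definition taylor_branches (c f1 f2 f3 f4 s : R) : polynomial :=
  pcomp (taylor_poly f1 f2 f3 f4) [pvar 2 ++ alpha_poly c] ++
  pscale s (pcomp (taylor_poly f1 f2 f3 f4)
              [pvar 3 ++ pcomp (alpha_poly c) [pscale (-1) (pvar 0); pvar 1]]).

Lemma evalP_taylor_branches c f1 f2 f3 f4 s x l u v :
  evalP [x; l; u; v] (taylor_branches c f1 f2 f3 f4 s)
  = taylor4 f1 f2 f3 f4 (u + evalP [x; l] (alpha_poly c))
    + s * taylor4 f1 f2 f3 f4 (v + evalP [- x; l] (alpha_poly c)).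
Proof.
  unfold taylor_branches. rewrite evalP_app, evalP_pscale, !evalP_pcomp.
  simpl. unfold taylor4. ring.
Qed.

(** Orders of the variables [x], [l] and of the errors [u], [v] of [alpha_poly] on the two
    branches. *)
Definition branch_weights : list nat := [1; 1; 5; 5]%nat.

Lemma light_taylor_branches_diff kappa f1 f2 f3 f4 x l u v : 0 < kappa ->
  evalP [x; l; u; v] (light 5 branch_weights (taylor_branches (/ kappa) f1 f2 f3 f4 (-1)))
  = 2 * ((f1 + (kappa * f2 - f1) * l ^ 2 / (2 * kappa ^ 2)) * x + / 6 * f3 * x ^ 3).
Proof. intros Hk. vm_compute. field. lra. Qed.

(** Half the coefficients of [l ^ 2] and [l ^ 4] in [T (omega_1 - kappa) + T (omega_{-1} - kappa)],
    [T] the Taylor polynomial of [F] at [kappa], when [xi = b1 l + b3 l ^ 3 + O(l ^ 5)] and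
    [c = / kappa]. *)
Definition even_coef2 (c f1 f2 b1 : R) : R := c * f1 / 2 + f2 * b1 ^ 2 / 2.
Definition even_coef4 (c f1 f2 f3 f4 b1 b3 : R) : R :=
  c ^ 3 * f1 * b1 ^ 2 / 2 - c ^ 3 * f1 / 8 + f2 * b1 * b3 - c ^ 2 * f2 * b1 ^ 2 / 2
  + c ^ 2 * f2 / 8 + c * f3 * b1 ^ 2 / 4 + f4 * b1 ^ 4 / 24.

Definition odd_cubic_poly (b1 b3 : R) : polynomial :=
  [(b1, [1%nat]); (b3, [3%nat]); (1, [0; 1]%nat)].

(** The light part of the sum after substituting [x = b1 l + b3 l ^ 3 + e], [e = O(l ^ 5)],
    in the variables [l; e; u; v]. *)
Lemma light_taylor_branches_sum c f1 f2 f3 f4 b1 b3 l e u v :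
  evalP [l; e; u; v] (light 5 [1; 5; 5; 5]%nat
     (pcomp (light 5 branch_weights (taylor_branches c f1 f2 f3 f4 1))
            [odd_cubic_poly b1 b3; pvar 0; pvar 2; pvar 3]))
  = 2 * (even_coef2 c f1 f2 b1 * l ^ 2 + even_coef4 c f1 f2 f3 f4 b1 b3 * l ^ 4).
Proof. vm_compute. field. Qed.

Lemma F_branch_taylor kappa (x : R -> R) : 0 < kappa -> bigO 1 x ->
  bigO 5 (fun l => F (kappa + branch kappa (x l) l) - F kappa
    - taylor4 (dF 1 kappa) (dF 2 kappa) (dF 3 kappa) (dF 4 kappa) (branch kappa (x l) l)).
Proof.
  intros Hk Hx. destruct (F_taylor4 kappa Hk) as [M HM].
  apply (bigO_comp 5 (fun h => F (kappa + h) - F kappa - _) _ M (kappa / 2) ltac:(lra) HM).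
  exact (bigO_branch kappa x Hk Hx).
Qed.

Section Branches.

Variables (kappa : R) (x : R -> R).
Hypotheses (Hkappa : 0 < kappa) (Hx : bigO 1 x).

Let T := taylor4 (dF 1 kappa) (dF 2 kappa) (dF 3 kappa) (dF 4 kappa).
Let alpha (y : R -> R) (l : R) := evalP [y l; l] (alpha_poly (/ kappa)).
Let err_plus l := branch kappa (x l) l - alpha x l.
Let err_minus l := branch kappa (- x l) l - alpha (fun l => - x l) l.
Let vars := [x; fun l => l; err_plus; err_minus].

Lemma bigO_err_plus : bigO 5 err_plus.
Proof. exact (bigO_branch_expansion kappa x Hkappa Hx). Qed.

Lemma bigO_err_minus : bigO 5 err_minus.
Proof. exact (bigO_branch_expansion kappa (fun l => - x l) Hkappa (bigO_opp 1 x Hx)). Qed.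

Lemma bigO_branch_vars : Forall2 bigO branch_weights vars.
Proof. repeat constructor; auto using bigO_id, bigO_err_plus, bigO_err_minus. Qed.

Lemma evalP_taylor_branches_vars s l :
  evalP (vals vars l)
    (taylor_branches (/ kappa) (dF 1 kappa) (dF 2 kappa) (dF 3 kappa) (dF 4 kappa) s)
  = T (branch kappa (x l) l) + s * T (branch kappa (- x l) l).
Proof.
  unfold vals, vars; cbn [map]. rewrite evalP_taylor_branches.
  unfold err_plus, err_minus, alpha, T. f_equal; [|f_equal]; f_equal; ring.
Qed.

Lemma taylor_branch_diff :
  bigO 5 (fun l => T (branch kappa (x l) l) - T (branch kappa (- x l) l)
    - 2 * ((dF 1 kappa + (kappa * dF 2 kappa - dF 1 kappa) * l ^ 2 / (2 * kappa ^ 2)) * x l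
           + / 6 * dF 3 kappa * x l ^ 3)).
Proof.
  apply (bigO_ext _ _ _ (bigO_poly_expansion 5 _ _ _ _ bigO_branch_vars
    (fun l => light_taylor_branches_diff kappa (dF 1 kappa) (dF 2 kappa) (dF 3 kappa) (dF 4 kappa)
                (x l) l (err_plus l) (err_minus l) Hkappa))).
  intros l. rewrite evalP_taylor_branches_vars. ring.
Qed.

Lemma F_branch_diff :
  bigO 5 (fun l => (F (kappa + branch kappa (x l) l) - F (kappa + branch kappa (- x l) l)) / 2
    - ((dF 1 kappa + (kappa * dF 2 kappa - dF 1 kappa) * l ^ 2 / (2 * kappa ^ 2)) * x l
       + / 6 * dF 3 kappa * x l ^ 3)).
Proof.
  apply (bigO_ext _ _ _ (bigO_add _ _ _
    (bigO_scal _ (/ 2) _ (bigO_sub _ _ _ (F_branch_taylor kappa x Hkappa Hx)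
                             (F_branch_taylor kappa (fun l => - x l) Hkappa (bigO_opp _ _ Hx))))
    (bigO_scal _ (/ 2) _ taylor_branch_diff))).
  intros l. unfold T. field. lra.
Qed.

Variables b1 b3 : R.
Hypothesis Hxe : bigO 5 (fun l => x l - b1 * l - b3 * l ^ 3).

Let c2 := even_coef2 (/ kappa) (dF 1 kappa) (dF 2 kappa) b1.
Let c4 := even_coef4 (/ kappa) (dF 1 kappa) (dF 2 kappa) (dF 3 kappa) (dF 4 kappa) b1 b3.

Lemma taylor_branch_sum :
  bigO 5 (fun l => T (branch kappa (x l) l) + T (branch kappa (- x l) l)
    - 2 * (c2 * l ^ 2 + c4 * l ^ 4)).
Proof.
  set (S := taylor_branches (/ kappa) (dF 1 kappa) (dF 2 kappa) (dF 3 kappa) (dF 4 kappa) 1).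
  set (e l := x l - b1 * l - b3 * l ^ 3).
  set (vars' := [fun l => l; e; err_plus; err_minus]).
  assert (Hvars' : Forall2 bigO [1; 5; 5; 5]%nat vars').
  { repeat constructor; [exact bigO_id | exact Hxe | exact bigO_err_plus | exact bigO_err_minus]. }
  assert (Hsubst : forall l, evalP (vals vars' l)
      (pcomp (light 5 branch_weights S) [odd_cubic_poly b1 b3; pvar 0; pvar 2; pvar 3])
      = evalP (vals vars l) (light 5 branch_weights S)).
  { intros l. rewrite evalP_pcomp. unfold vals, vars, vars'; cbn [map].
    f_equal. simpl. unfold e. repeat f_equal; ring. }
  assert (Hlight := bigO_poly_expansion 5 _ _ S _ bigO_branch_vars (fun l => eq_refl)).
  assert (Hsubst_light := bigO_poly_expansion 5 _ vars' _ _ Hvars'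
    (fun l => light_taylor_branches_sum (/ kappa) (dF 1 kappa) (dF 2 kappa) (dF 3 kappa)
                (dF 4 kappa) b1 b3 l (e l) (err_plus l) (err_minus l))).
  apply (bigO_ext _ _ _ (bigO_add _ _ _ Hlight Hsubst_light)).
  intros l. rewrite Hsubst. unfold S. rewrite evalP_taylor_branches_vars. unfold c2, c4. ring.
Qed.

Lemma even_coefs_vanish :
  near0 (fun l => F (kappa + branch kappa (x l) l) + F (kappa + branch kappa (- x l) l)
                  = 2 * F kappa) ->
  c2 = 0 /\ c4 = 0.
Proof.
  intros Hsum. apply bigO_even_quartic.
  apply (bigO_eq _ _ _ (bigO_scal _ (- / 2) _ (bigO_add _ _ _
    (bigO_add _ _ _ (F_branch_taylor kappa x Hkappa Hx)
                    (F_branch_taylor kappa (fun l => - x l) Hkappa (bigO_opp _ _ Hx)))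
    taylor_branch_sum))).
  apply (near0_impl _ _ Hsum). intros l Hl. unfold T. lra.
Qed.

End Branches.

Lemma sqrt_mu0_F kappa : 0 < kappa -> sqrt (mu0 kappa) * F kappa = kappa.
Proof.
  intros Hk. pose proof (tanh_pos kappa Hk).
  unfold F. destruct (Rle_dec 0 kappa) as [_|]; [|lra].
  unfold mu0. rewrite <- sqrt_mult
    by (apply Rlt_le; first [apply Rdiv_lt_0_compat | apply Rmult_lt_0_compat]; assumption).
  replace (kappa / tanh kappa * (kappa * tanh kappa)) with (kappa * kappa) by (field; lra).
  apply sqrt_square. lra.
Qed.

Lemma F_absnk_sum kappa l z : 0 < kappa ->
  lam_minus kappa 1 l z = lam_plus kappa (-1) l z ->
  F (absnk kappa 1 l z) + F (absnk kappa (-1) l z) = 2 * F kappa.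
Proof.
  intros Hk Hlam. apply (f_equal snd) in Hlam. unfold lam_minus, lam_plus in Hlam. simpl in Hlam.
  assert (Hmu : 0 < sqrt (mu0 kappa))
    by (apply sqrt_lt_R0, Rdiv_lt_0_compat; [|apply tanh_pos]; assumption).
  apply (Rmult_eq_reg_l (sqrt (mu0 kappa))); [|lra].
  rewrite Rmult_plus_distr_l, (Rmult_comm 2), <- Rmult_assoc, sqrt_mu0_F by assumption. lra.
Qed.

Lemma absnk_branch kappa l z :
  absnk kappa 1 l z = kappa + branch kappa z l
  /\ absnk kappa (-1) l z = kappa + branch kappa (- z) l.
Proof.
  unfold absnk, branch.
  replace (IZR 1 * kappa + z) with (kappa + z) by ring.
  replace ((IZR (-1) * kappa + z) ^ 2) with ((kappa + - z) ^ 2) by ring.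
  split; ring.
Qed.

Lemma solve_even_coefs k f1 f2 f3 f4 b1 b3 l : 0 < k -> 0 < f1 -> 0 < b1 ->
  even_coef2 (/ k) f1 f2 b1 = 0 -> even_coef4 (/ k) f1 f2 f3 f4 b1 b3 = 0 ->
  l * sqrt (- f1 / (k * f2)) * (1 + l ^ 2 / (2 * k ^ 2) * (3 / 4 - f1 / (k * f2)
    + k / 4 * (f2 / f1 - 2 * (f3 / f2)) + k / 12 * (f4 * f1 / f2 ^ 2))) = b1 * l + b3 * l ^ 3.
Proof.
  intros Hk Hf1 Hb1 Hc2 Hc4. unfold even_coef2 in Hc2.
  assert (H2 : f2 * b1 ^ 2 = - f1 / k) by (unfold Rdiv in *; lra).
  assert (Hf2 : f2 = - f1 / (k * b1 ^ 2)).
  { replace f2 with (f2 * b1 ^ 2 / b1 ^ 2) by (field; lra). rewrite H2. field; lra. }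
  assert (Hf2n : f2 <> 0).
  { intros E. rewrite E in H2. assert (0 < f1 / k) by (apply Rdiv_lt_0_compat; lra). lra. }
  assert (Hsq : - f1 / (k * f2) = b1 ^ 2) by (rewrite Hf2; field; repeat split; lra).
  rewrite Hsq, sqrt_pow2 by lra.
  assert (Hb3 : b3 = - even_coef4 (/ k) f1 f2 f3 f4 b1 0 / (f2 * b1)).
  { assert (E : even_coef4 (/ k) f1 f2 f3 f4 b1 b3
                 = f2 * b1 * b3 + even_coef4 (/ k) f1 f2 f3 f4 b1 0) by (unfold even_coef4; ring).
    rewrite Hc4 in E. field_simplify_eq; [lra | split; lra]. }
  rewrite Hb3. unfold even_coef4. rewrite Hf2. field. repeat split; lra.
Qed.

Theorem lemma4p7 (kappa : R) (xi : R -> R) :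
  0 < kappa -> is_xi_plus kappa xi ->
  (exists delta, 0 < delta /\ forall l, Rabs l < delta ->
     (F (omega kappa xi 1 l) + F (omega kappa xi (-1) l)) / 2 = F kappa)
  /\
  (exists C delta, 0 < delta /\ forall l, Rabs l < delta ->
     Rabs ((F (omega kappa xi 1 l) - F (omega kappa xi (-1) l)) / 2
           - ((dF 1 kappa + (kappa * dF 2 kappa - dF 1 kappa) * l ^ 2 / (2 * kappa ^ 2))
                * xi l
              + / 6 * dF 3 kappa * xi l ^ 3))
     <= C * Rabs l ^ 5)
  /\
  (exists C delta, 0 < delta /\ forall l, Rabs l < delta ->
     Rabs (xi l
           - l * sqrt (- dF 1 kappa / (kappa * dF 2 kappa))
               * (1 + l ^ 2 / (2 * kappa ^ 2)
                    * (3 / 4 - dF 1 kappa / (kappa * dF 2 kappa)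
                       + kappa / 4 * (dF 2 kappa / dF 1 kappa
                                      - 2 * (dF 3 kappa / dF 2 kappa))
                       + kappa / 12 * (dF 4 kappa * dF 1 kappa / (dF 2 kappa) ^ 2))))
     <= C * Rabs l ^ 5).
Proof.
  intros Hk [[a [r [Hr Hxi]]] [d [Hd Hd_pos]]].
  destruct (odd_pseries_expansion xi a r d Hr
              (fun l Hl => conj (proj1 (Hxi l Hl)) (proj1 (proj2 (Hxi l Hl)))) Hd) as [Hda Hexp].
  assert (Hx := bigO_odd_cubic _ _ _ Hexp).
  assert (Hom : forall l, omega kappa xi 1 l = kappa + branch kappa (xi l) l
                      /\ omega kappa xi (-1) l = kappa + branch kappa (- xi l) l)
    by (intros; apply absnk_branch).
  assert (Hsum : near0 (fun l => F (kappa + branch kappa (xi l) l)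
                                 + F (kappa + branch kappa (- xi l) l) = 2 * F kappa)).
  { exists r. split; [exact Hr|]. intros l Hl. destruct (Hom l) as [<- <-].
    apply F_absnk_sum; [exact Hk | apply Hxi, Hl]. }
  split; [|split].
  - apply (near0_impl _ _ Hsum). intros l Hl. destruct (Hom l) as [-> ->]. rewrite Hl. field.
  - apply (bigO_ext _ _ _ (F_branch_diff kappa xi Hk Hx)).
    intros l. destruct (Hom l) as [-> ->]. reflexivity.
  - destruct (even_coefs_vanish kappa xi Hk Hx _ _ Hexp Hsum) as [Hc2 Hc4].
    assert (Hb1 : 0 < a 1%nat) by (rewrite <- Hda; exact Hd_pos).
    apply (bigO_ext _ _ _ Hexp). intros l.
    rewrite (solve_even_coefs kappa _ _ _ _ _ _ l Hk (dF1_pos kappa Hk) Hb1 Hc2 Hc4). ring.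
Qed.
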